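(* Let $\mathsf V$ be a pseudovariety of semigroups. Then $\mathsf V$ is concatenation-closed if and only if the pseudovariety of semigroupoids $g\mathsf V$ is concatenation-closed.
   Context: A pseudovariety of semigroups is a class of finite semigroups closed under subsemigroups, homomorphic images and finite direct products; a pseudovariety of semigroupoids is a class of finite semigroupoids closed under divisors, finite direct products and finite coproducts (semigroups being one-vertex semigroupoids; composition of edges $s,t$ is defined when the source of $s$ equals the range of $t$). $g\mathsf V$ is the smallest pseudovariety of semigroupoids containing $\mathsf V$. For a graph $A$ with free semigroupoid of paths $A^+$, a language $L\subseteq E(A^+)$ is $\mathsf W$-recognizable if $L=\varphi^{-1}\varphi(L)$ for a homomorphism $\varphi\colon A^+\to F$ with $F\in\mathsf W$; concatenation $LK$ consists of the composable products $uv$, $u\in L$, $v\in K$. A pseudovariety of semigroups (resp. semigroupoids) is concatenation-closed if for every finite alphabet (resp. finite graph) $A$ the recognizable languages over $A$ are closed under concatenation. *)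

From mathcomp Require Import all_boot.
Set Implicit Arguments. Unset Strict Implicit. Unset Printing Implicit Defensive.

Record finSemigroup := FinSemigroup {
  scar : finType;
  smul : scar -> scar -> scar;
  smulA : forall x y z, smul x (smul y z) = smul (smul x y) z }.
Arguments smul {_}.

Definition sg_morph (S T : finSemigroup) (f : scar S -> scar T) :=
  forall x y, f (smul x y) = smul (f x) (f y).

Definition trivial_sg : finSemigroup :=
  @FinSemigroup unit (fun _ _ => tt) (fun _ _ _ => erefl).

Definition prod_sg (S T : finSemigroup) : finSemigroup.
Proof.
refine (@FinSemigroup (prod (scar S) (scar T))
  (fun x y => (smul x.1 y.1, smul x.2 y.2)) _).
by move=> [x1 x2] [y1 y2] [z1 z2] /=; rewrite !smulA.
Defined.

(* Closure under subsemigroups (up to isomorphism: injective morphisms),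
   homomorphic images (surjective morphisms) and finite direct products
   (the empty product being the trivial semigroup). *)
Definition sg_pseudovariety (V : finSemigroup -> Prop) :=
  [/\ (forall S T (f : scar S -> scar T),
          injective f -> sg_morph f -> V T -> V S),
      (forall S T (f : scar S -> scar T),
          (forall y, exists x, f x = y) -> sg_morph f -> V S -> V T),
      V trivial_sg &
      (forall S T, V S -> V T -> V (prod_sg S T))].

(* Free semigroup A^+ : the nonempty word a :: q is represented by (a, q). *)
Definition word (A : finType) := (A * seq A)%type.
Definition wcat (A : finType) (u v : word A) : word A :=
  (u.1, u.2 ++ v.1 :: v.2).

Definition sg_recognizable (V : finSemigroup -> Prop) (A : finType)
    (L : word A -> Prop) :=
  exists (S : finSemigroup) (phi : word A -> scar S),
    [/\ V S,
        (forall u v, phi (wcat u v) = smul (phi u) (phi v)) &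
        (forall u, L u <-> exists v, L v /\ phi v = phi u)].

Definition sg_concat (A : finType) (L K : word A -> Prop) : word A -> Prop :=
  fun w => exists u v, [/\ L u, K v & w = wcat u v].

Definition sg_concat_closed (V : finSemigroup -> Prop) :=
  forall (A : finType) (L K : word A -> Prop),
    sg_recognizable V L -> sg_recognizable V K ->
    sg_recognizable V (sg_concat L K).

(* comp s t (= st) is meaningful when dom s = cod t                    *)
(* (source of s = range of t); outside that it is junk.                *)

Record finSemigroupoid := FinSemigroupoid {
  vtx : finType;
  edg : finType;
  dom : edg -> vtx;
  cod : edg -> vtx;
  comp : edg -> edg -> edg;
  comp_dom : forall s t, dom s = cod t -> dom (comp s t) = dom t;
  comp_cod : forall s t, dom s = cod t -> cod (comp s t) = cod s;
  compA : forall s t u, dom s = cod t -> dom t = cod u ->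
     comp (comp s t) u = comp s (comp t u) }.
Arguments dom {_}. Arguments cod {_}. Arguments comp {_}.

Definition sgd_of_sg (S : finSemigroup) : finSemigroupoid.
Proof.
refine (@FinSemigroupoid unit (scar S) (fun _ => tt) (fun _ => tt)
   smul _ _ _) => //.
by move=> s t u _ _; rewrite smulA.
Defined.

Definition trivial_sgd : finSemigroupoid :=
  sgd_of_sg trivial_sg.

Definition empty_sgd : finSemigroupoid.
Proof.
refine (@FinSemigroupoid void void (fun x => x) (fun x => x)
  (fun x _ => x) _ _ _); by case.
Defined.

Definition prod_sgd (C D : finSemigroupoid) : finSemigroupoid.
Proof.
refine (@FinSemigroupoid (prod (vtx C) (vtx D)) (prod (edg C) (edg D))
  (fun s => (dom s.1, dom s.2)) (fun s => (cod s.1, cod s.2))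
  (fun s t => (comp s.1 t.1, comp s.2 t.2)) _ _ _).
- by move=> [s1 s2] [t1 t2] /= [h1 h2]; rewrite !comp_dom.
- by move=> [s1 s2] [t1 t2] /= [h1 h2]; rewrite !comp_cod.
- by move=> [s1 s2] [t1 t2] [u1 u2] /= [h1 h2] [k1 k2]; rewrite !compA.
Defined.

Definition coprod_comp (C D : finSemigroupoid) (s t : edg C + edg D) :
    edg C + edg D :=
  match s, t with
  | inl s, inl t => inl (comp s t)
  | inr s, inr t => inr (comp s t)
  | _, _ => s
  end.

Definition coprod_sgd (C D : finSemigroupoid) : finSemigroupoid.
Proof.
refine (@FinSemigroupoid (sum (vtx C) (vtx D)) (sum (edg C) (edg D))
  (fun s => match s with inl s => inl (dom s) | inr s => inr (dom s) end)
  (fun s => match s with inl s => inl (cod s) | inr s => inr (cod s) end)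
  (@coprod_comp C D) _ _ _).
- by move=> [s|s] [t|t] //= [h]; rewrite comp_dom.
- by move=> [s|s] [t|t] //= [h]; rewrite comp_cod.
- by move=> [s|s] [t|t] [u|u] //= [h] [k]; rewrite compA.
Defined.

(* Division D ≺ C (Tilson): a relational morphism (function on vertices,
   nonempty relation on edges, compatible with ends and composition)
   which is injective on coterminal edges. *)
Definition divides (D C : finSemigroupoid) :=
  exists (tv : vtx D -> vtx C) (te : edg D -> edg C -> Prop),
    [/\ (forall s, exists s', te s s'),
        (forall s s', te s s' -> dom s' = tv (dom s) /\ cod s' = tv (cod s)),
        (forall s t s' t', dom s = cod t -> te s s' -> te t t' ->
            te (comp s t) (comp s' t')) &
        (forall s t s', dom s = dom t -> cod s = cod t ->
            te s s' -> te t s' -> s = t)].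

(* Closure under divisors, finite direct products and finite coproducts
   (empty product = trivial semigroupoid, empty coproduct = empty one). *)
Definition sgd_pseudovariety (W : finSemigroupoid -> Prop) :=
  [/\ (forall D C, divides D C -> W C -> W D),
      W trivial_sgd,
      (forall C D, W C -> W D -> W (prod_sgd C D)),
      W empty_sgd &
      (forall C D, W C -> W D -> W (coprod_sgd C D))].

Definition gV (V : finSemigroup -> Prop) : finSemigroupoid -> Prop :=
  fun C => forall W, sgd_pseudovariety W ->
    (forall S, V S -> W (sgd_of_sg S)) -> W C.

Record graph := Graph {
  gvtx : finType;
  gedg : finType;
  gdom : gedg -> gvtx;
  gcod : gedg -> gvtx }.
Arguments gdom {_}. Arguments gcod {_}.

Definition gadj (A : graph) (a b : gedg A) := gdom a == gcod b.

(* A path a_1 a_2 ... a_n (n >= 1) with source(a_i) = range(a_{i+1}),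
   represented by (a_1, [a_2; ...; a_n]). *)
Definition gpath (A : graph) :=
  {p : gedg A * seq (gedg A) | path (@gadj A) p.1 p.2}.

Definition pdom (A : graph) (u : gpath A) : gvtx A :=
  gdom (last (val u).1 (val u).2).
Definition pcod (A : graph) (u : gpath A) : gvtx A := gcod (val u).1.

(* product uv of paths (concatenation); meaningful when pdom u = pcod v *)
Definition pcat (A : graph) (u v : gpath A) : gpath A :=
  insubd u ((val u).1, (val u).2 ++ (val v).1 :: (val v).2).

Definition sgd_hom (A : graph) (F : finSemigroupoid)
    (fv : gvtx A -> vtx F) (fe : gpath A -> edg F) :=
  [/\ (forall u, dom (fe u) = fv (pdom u)),
      (forall u, cod (fe u) = fv (pcod u)) &
      (forall u v, pdom u = pcod v -> fe (pcat u v) = comp (fe u) (fe v))].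

Definition sgd_recognizable (W : finSemigroupoid -> Prop) (A : graph)
    (L : gpath A -> Prop) :=
  exists (F : finSemigroupoid) (fv : gvtx A -> vtx F) (fe : gpath A -> edg F),
    [/\ W F, sgd_hom fv fe &
        (forall u, L u <-> exists v, L v /\ fe v = fe u)].

Definition sgd_concat (A : graph) (L K : gpath A -> Prop) : gpath A -> Prop :=
  fun w => exists u v, [/\ L u, K v, pdom u = pcod v & w = pcat u v].

Definition sgd_concat_closed (W : finSemigroupoid -> Prop) :=
  forall (A : graph) (L K : gpath A -> Prop),
    sgd_recognizable W L -> sgd_recognizable W K ->
    sgd_recognizable W (sgd_concat L K).

From Pilot Require Import Defs.
From mathcomp Require Import all_boot.
From Stdlib Require Import ClassicalEpsilon.
Set Implicit Arguments. Unset Strict Implicit. Unset Printing Implicit Defensive.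

(* Divisors of one-vertex semigroupoids of V form a pseudovariety of
   semigroupoids, so every member of gV divides some S in V.  A homomorphism
   from A^+ into a divisor of S lifts to a semigroup morphism from words over
   the edges into S which determines it on coterminal paths.

   If gV is concatenation-closed, so is V, since words are the paths of the
   one-vertex graph.  Conversely, if V is concatenation-closed then the first
   and last letters of a word are V-recognizable; pairing the lifts with a
   morphism separating them, a path language recognized in gV is saturated by
   a word language recognized in V.  A morphism onto T in V recognizing the
   concatenation of these word languages, decorated with the ends of the path,
   is a homomorphism into the semigroupoid of triples (range, t, source),
   which divides T. *)

Lemma divides_refl C : divides C C.
Proof.
exists id, (fun s s' => s' = s); split.
- by move=> s; exists s.
- by move=> s s' ->.
- by move=> s t s' t' _ -> ->.
- by move=> s t s' _ _ -> ->.
Qed.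

Lemma divides_trans D C E : divides D C -> divides C E -> divides D E.
Proof.
move=> [tv [te [te_tot te_ends te_comp te_inj]]].
move=> [tv' [te' [te'_tot te'_ends te'_comp te'_inj]]].
exists (tv' \o tv), (fun s s'' => exists2 s', te s s' & te' s' s''); split.
- move=> s; have [s' hs] := te_tot s; have [s'' hs'] := te'_tot s'.
  by exists s''; exists s'.
- move=> s s'' [s' h h']; have [-> ->] := te'_ends _ _ h'.
  by have [-> ->] := te_ends _ _ h.
- move=> s t s'' t'' e [s' h h'] [t' k k'].
  exists (Defs.comp s' t'); first exact: te_comp.
  apply: te'_comp => //.
  by have [-> _] := te_ends _ _ h; have [_ ->] := te_ends _ _ k; rewrite e.
- move=> s t s'' ed ec [s1 h h'] [t1 k k'].
  have [d1 c1] := te_ends _ _ h; have [d2 c2] := te_ends _ _ k.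
  have e1 : s1 = t1.
    by apply: (te'_inj _ _ s''); rewrite ?d1 ?d2 ?c1 ?c2 ?ed ?ec.
  by subst t1; apply: (te_inj _ _ s1).
Qed.

(* Into a one-vertex semigroupoid the vertex map is forced, so a division
   is just a relation on edges. *)
Definition sg_division C (S : finSemigroup) (te : edg C -> scar S -> Prop) :=
  [/\ forall s, exists a, te s a,
      forall s t a b, dom s = cod t -> te s a -> te t b ->
        te (Defs.comp s t) (smul a b) &
      forall s t a, dom s = dom t -> cod s = cod t -> te s a -> te t a -> s = t].

Lemma divides_sgP C S :
  divides C (sgd_of_sg S) <-> exists te : edg C -> scar S -> Prop, sg_division te.
Proof.
split=> [[tv [te [te_tot _ te_comp te_inj]]] | [te [te_tot te_comp te_inj]]].
  by exists te; split.
by exists (fun _ => tt), te; split.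
Qed.

Lemma sg_division_coprod C D S (teC : edg C -> scar S -> Prop)
    (teD : edg D -> scar S -> Prop) :
  sg_division teC -> sg_division teD -> divides (coprod_sgd C D) (sgd_of_sg S).
Proof.
move=> [C_tot C_comp C_inj] [D_tot D_comp D_inj]; apply/divides_sgP.
exists (fun s a => match s with inl c => teC c a | inr d => teD d a end); split.
- by case=> s; [apply: C_tot | apply: D_tot].
- by case=> s [t|t] a b //= [e]; [apply: C_comp | apply: D_comp].
- case=> s [t|t] a //= [ed] [ec] ha hb.
  + by rewrite (C_inj s t a).
  + by rewrite (D_inj s t a).
Qed.

Lemma sg_division_fst C S T (te : edg C -> scar S -> Prop) (t0 : scar T) :
  sg_division te -> sg_division (fun c (a : scar (prod_sg S T)) => te c a.1).
Proof.
move=> [tot cmp inj]; split; last by move=> s t a; apply: inj.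
- by move=> c; have [a ha] := tot c; exists (a, t0).
- by move=> s t a b; apply: cmp.
Qed.

Lemma sg_division_snd C S T (te : edg C -> scar T -> Prop) (s0 : scar S) :
  sg_division te -> sg_division (fun c (a : scar (prod_sg S T)) => te c a.2).
Proof.
move=> [tot cmp inj]; split; last by move=> s t a; apply: inj.
- by move=> c; have [a ha] := tot c; exists (s0, a).
- by move=> s t a b; apply: cmp.
Qed.

Lemma sg_division_prod C D S T (teC : edg C -> scar S -> Prop)
    (teD : edg D -> scar T -> Prop) :
  sg_division teC -> sg_division teD ->
  sg_division (fun (s : edg (prod_sgd C D)) (a : scar (prod_sg S T)) =>
                 teC s.1 a.1 /\ teD s.2 a.2).
Proof.
move=> [C_tot C_comp C_inj] [D_tot D_comp D_inj]; split.
- move=> [s1 s2]; have [a ha] := C_tot s1; have [b hb] := D_tot s2.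
  by exists (a, b).
- move=> [s1 s2] [t1 t2] [a1 a2] [b1 b2] /= [e1 e2] [h1 h2] [k1 k2].
  by split; [apply: C_comp | apply: D_comp].
- move=> [s1 s2] [t1 t2] [a1 a2] /= [e1 e2] [c1 c2] [h1 h2] [k1 k2].
  by rewrite (C_inj s1 t1 a1) // (D_inj s2 t2 a2).
Qed.

(* Totality makes a semigroupoid dividing an empty semigroup edgeless. *)
Lemma sg_division_edgeless C S (te : edg C -> scar S -> Prop) (X : finSemigroup) :
  sg_division te -> (scar S -> False) ->
  sg_division (fun (_ : edg C) (_ : scar X) => False).
Proof. by move=> [tot _ _] S0; split=> // s; have [a _] := tot s. Qed.

Definition sg_divisor (V : finSemigroup -> Prop) C :=
  exists2 S, V S & divides C (sgd_of_sg S).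

Lemma sg_divisor_pseudovariety V :
  sg_pseudovariety V -> sgd_pseudovariety (sg_divisor V).
Proof.
move=> [_ _ Vtriv Vprod]; split.
- by move=> D C h [S HS h']; exists S => //; apply: divides_trans h h'.
- by exists trivial_sg => //; apply: divides_refl.
- move=> C D [S HS /divides_sgP[te hC]] [T HT /divides_sgP[te' hD]].
  exists (prod_sg S T); first exact: Vprod.
  by apply/divides_sgP; exists (fun s a => te s.1 a.1 /\ te' s.2 a.2);
    apply: sg_division_prod.
- exists trivial_sg => //.
  by exists (fun v : vtx empty_sgd => match v with end), (fun _ _ => False); split; case.
- move=> C D [S HS /divides_sgP[te hC]] [T HT /divides_sgP[te' hD]].
  (* [prod_sg S T] is empty as soon as one factor is, so empty factors are
     handled separately. *)
  case: (pickP (fun _ : scar S => true)) => [s0 _|S0]; last first.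
    exists T => //; apply: sg_division_coprod hD.
    by apply: sg_division_edgeless hC _ => a; have := S0 a.
  case: (pickP (fun _ : scar T => true)) => [t0 _|T0]; last first.
    exists S => //; apply: sg_division_coprod hC _.
    by apply: sg_division_edgeless hD _ => a; have := T0 a.
  exists (prod_sg S T); first exact: Vprod.
  exact: sg_division_coprod (sg_division_fst t0 hC) (sg_division_snd s0 hD).
Qed.

Section GV.
Variable V : finSemigroup -> Prop.

Lemma gV_sgd_of_sg S : V S -> gV V (sgd_of_sg S).
Proof. by move=> HS W _ HW; apply: HW. Qed.

Lemma gV_divides D C : divides D C -> gV V C -> gV V D.
Proof.
move=> h hC W HW HV; have [Wdiv _ _ _ _] := HW.
exact: Wdiv h (hC W HW HV).
Qed.

Lemma gV_sg_divisor C : sg_pseudovariety V -> gV V C -> sg_divisor V C.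
Proof.
move=> HV hC; apply: hC; first exact: sg_divisor_pseudovariety.
by move=> S HS; exists S => //; apply: divides_refl.
Qed.

End GV.

Section Paths.
Variable A : graph.

Lemma pcat_val (u v : gpath A) :
  pdom u = pcod v -> val (pcat u v) = wcat (val u) (val v).
Proof.
move=> e; rewrite /pcat insubdK //= unfold_in /= cat_path (valP u) /=.
by rewrite (valP v) andbT; apply/eqP.
Qed.

Lemma pdom_pcat (u v : gpath A) : pdom u = pcod v -> pdom (pcat u v) = pdom v.
Proof. by move=> e; rewrite /pdom pcat_val //= last_cat. Qed.

Lemma pcod_pcat (u v : gpath A) : pdom u = pcod v -> pcod (pcat u v) = pcod u.
Proof. by move=> e; rewrite /pcod pcat_val. Qed.

Definition edge_path (e : gedg A) : gpath A := exist _ (e, [::]) isT.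

Lemma gpath_ind (P : gpath A -> Prop) :
  (forall e, P (edge_path e)) ->
  (forall p e, pdom p = gcod e -> P p -> P (pcat p (edge_path e))) ->
  forall p, P p.
Proof.
move=> Pe Pcat [[a q] Hp]; elim/last_ind: q Hp => [|q b IHq] Hp.
  by have -> : exist _ (a, [::]) Hp = edge_path a by apply: val_inj.
have /andP[Hq /eqP Hb] : path (@gadj A) a q && gadj (last a q) b by rewrite -rcons_path.
pose p : gpath A := exist _ (a, q) Hq.
have -> : exist _ (a, rcons q b) Hp = pcat p (edge_path b).
  by apply: val_inj; rewrite pcat_val // /wcat /= cats1.
exact: Pcat (IHq Hq).
Qed.

End Paths.

Definition word_morph (A : finType) (S : finSemigroup) (phi : word A -> scar S) :=
  forall u v, phi (wcat u v) = smul (phi u) (phi v).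

Definition word_fold (A : finType) (S : finSemigroup) (c : A -> scar S) (w : word A) :=
  foldl (fun acc x => smul acc (c x)) (c w.1) w.2.

Lemma word_foldM (A : finType) (S : finSemigroup) (c : A -> scar S) :
  word_morph (word_fold c).
Proof.
have foldl_smul x y s : foldl (fun acc x => smul acc (c x)) (smul x y) s =
    smul x (foldl (fun acc x => smul acc (c x)) y s).
  by elim: s y => [|a s IH] y //=; rewrite -smulA IH.
by move=> u v; rewrite /word_fold /wcat /= foldl_cat /= foldl_smul.
Qed.

Definition coterminal_saturated (A : graph) X (f : gpath A -> X) (L : gpath A -> Prop) :=
  forall p q : gpath A, pdom p = pdom q -> pcod p = pcod q -> f p = f q -> L p -> L q.

(* Send each letter to some element related to its image; compatibility of the
   division then relates the image of every path to its value, and injectivity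
   on coterminal edges concludes. *)
Lemma divides_sg_hom_lift (A : graph) F (S : finSemigroup)
    (fv : gvtx A -> vtx F) (fe : gpath A -> edg F) :
  divides F (sgd_of_sg S) -> sgd_hom fv fe ->
  exists2 psi : word (gedg A) -> scar S, word_morph psi &
    forall p q : gpath A, pdom p = pdom q -> pcod p = pcod q ->
      psi (val p) = psi (val q) -> fe p = fe q.
Proof.
move=> /divides_sgP[te [te_tot te_comp te_inj]] [fe_dom fe_cod feM].
pose c e :=
  proj1_sig (constructive_indefinite_description _ (te_tot (fe (edge_path e)))).
have te_c e : te (fe (edge_path e)) (c e).
  by rewrite /c; case: constructive_indefinite_description.
have te_fold : forall p : gpath A, te (fe p) (word_fold c (val p)).
  elim/gpath_ind => // p e pe IHp; rewrite pcat_val // word_foldM feM //.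
  by apply: te_comp => //; rewrite fe_dom fe_cod pe.
exists (word_fold c); first exact: word_foldM.
move=> p q ed ec ep; apply: (te_inj _ _ (word_fold c (val p))).
- by rewrite !fe_dom ed.
- by rewrite !fe_cod ec.
- exact: te_fold.
- by rewrite ep; apply: te_fold.
Qed.

Section Recognizable.
Variable V : finSemigroup -> Prop.
Hypothesis HV : sg_pseudovariety V.

Lemma sg_recognizableP (A : finType) (L : word A -> Prop) :
  sg_recognizable V L <->
  exists S (phi : word A -> scar S),
    [/\ V S, word_morph phi & forall u v, phi u = phi v -> L u -> L v].
Proof.
split=> [[S [phi [HS phiM satL]]] | [S [phi [HS phiM satL]]]].
  exists S, phi; split=> // u v e /satL Lu; apply/satL.
  by exists u; split=> //; apply/satL.
exists S, phi; split=> // u; split=> [Lu | [v [Lv /satL]]]; last exact.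
by exists u.
Qed.

Lemma sg_recognizable_ext (A : finType) (L L' : word A -> Prop) :
  (forall w, L w <-> L' w) -> sg_recognizable V L -> sg_recognizable V L'.
Proof.
move=> LL' /sg_recognizableP[S [phi [HS phiM satL]]]; apply/sg_recognizableP.
by exists S, phi; split=> // u v e /LL' /(satL u v e) /LL'.
Qed.

Lemma sg_recognizable_full (A : finType) : sg_recognizable V (fun _ : word A => True).
Proof.
have [_ _ Vtriv _] := HV; apply/sg_recognizableP.
by exists trivial_sg, (fun _ => tt).
Qed.

Lemma sg_recognizable_compl (A : finType) (L : word A -> Prop) :
  sg_recognizable V L -> sg_recognizable V (fun w => ~ L w).
Proof.
move=> /sg_recognizableP[S [phi [HS phiM satL]]]; apply/sg_recognizableP.
by exists S, phi; split=> // u v e nLu Lv; apply/nLu/(satL v u).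
Qed.

Lemma sg_recognizable_preim (A B : finType) (h : word A -> word B) (L : word B -> Prop) :
  (forall u v, h (wcat u v) = wcat (h u) (h v)) ->
  sg_recognizable V L -> sg_recognizable V (fun w => L (h w)).
Proof.
move=> hM /sg_recognizableP[S [phi [HS phiM satL]]]; apply/sg_recognizableP.
exists S, (phi \o h); split=> // [u v | u v]; last exact: satL.
by rewrite /= hM phiM.
Qed.

Lemma sg_recognizable_family (A I : finType) (L : I -> word A -> Prop) :
  (forall i, sg_recognizable V (L i)) ->
  exists S (phi : word A -> scar S),
    [/\ V S, word_morph phi & forall i u v, phi u = phi v -> L i u -> L i v].
Proof.
have [_ _ Vtriv Vprod] := HV; move=> recL.
suff [S [phi [HS phiM satL]]] : exists S (phi : word A -> scar S),
    [/\ V S, word_morph phi &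
      forall i u v, i \in enum I -> phi u = phi v -> L i u -> L i v].
  by exists S, phi; split=> // i u v; apply: satL; rewrite mem_enum.
elim: (enum I) => [|i s [S [phi [HS phiM satL]]]].
  by exists trivial_sg, (fun _ => tt).
have /sg_recognizableP[T [psi [HT psiM satLi]]] := recL i.
exists (prod_sg T S), (fun w => (psi w, phi w)); split; first exact: Vprod.
  by move=> u v; rewrite phiM psiM.
move=> j u v; rewrite inE => /orP[/eqP -> | js] [e1 e2]; first exact: satLi.
exact: satL.
Qed.

End Recognizable.

Definition wsubst (A B : finType) (f : A -> word B) (w : word A) : word B :=
  ((f w.1).1, (f w.1).2 ++ flatten [seq (f x).1 :: (f x).2 | x <- w.2]).

Lemma wsubstM (A B : finType) (f : A -> word B) u v :
  wsubst f (wcat u v) = wcat (wsubst f u) (wsubst f v).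
Proof. by rewrite /wsubst /wcat /= map_cat flatten_cat /= -!catA. Qed.

Definition letter_false (w : word bool) := w = (false, [::]).

Lemma sg_concat_full_full (A : finType) (x : word A) :
  sg_concat (fun _ => True) (fun _ => True) x <-> x.2 != [::].
Proof.
split=> [[u [v [_ _ ->]]] | ]; first by rewrite /= -size_eq0 size_cat addnS.
by case: x => a [|b q] // _; exists (a, [::]), (b, q).
Qed.

Lemma sg_concat_letter_false_full (x : word bool) :
  sg_concat letter_false (fun _ => True) x <-> x.1 = false /\ x.2 != [::].
Proof.
split=> [[u [v [-> _ ->]]] // | ].
case: x => a [|b q] /= [-> //] _.
by exists (false, [::]), (b, q).
Qed.

Lemma sg_concat_full_letter_false (x : word bool) :
  sg_concat (fun _ => True) letter_false x <-> last x.1 x.2 = false /\ x.2 != [::].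
Proof.
split=> [[u [v [_ -> ->]]] | ].
  by rewrite /= last_cat /=; case: (u.2).
case: x => a q /=; case/lastP: q => [|q b] /=; first by case.
rewrite last_rcons => -[-> _].
by exists (a, q), (false, [::]); rewrite /wcat cats1.
Qed.

Definition ends_separating (A : finType) X (g : word A -> X) :=
  forall u v, g u = g v -> u.1 = v.1 /\ last u.1 u.2 = last v.1 v.2.

Section EndLetters.
Variable V : finSemigroup -> Prop.
Hypothesis HV : sg_pseudovariety V.
Hypothesis HC : sg_concat_closed V.

(* Words of length at least 2 are [A^+ A^+]; pulling this back along the
   substitution [false |-> false, true |-> true true] isolates [false]. *)
Lemma sg_recognizable_letter_false : sg_recognizable V letter_false.
Proof.
pose f (b : bool) : word bool := (b, if b then [:: true] else [::]).
have full := sg_recognizable_full HV bool.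
apply: sg_recognizable_ext (sg_recognizable_compl
  (sg_recognizable_preim (wsubstM f) (HC full full))) => -[a q].
rewrite /letter_false sg_concat_full_full.
by case: a; case: q => [|b q] //=; split=> // /(_ isT).
Qed.

Variable A : finType.

Lemma sg_recognizable_first (c : A) : sg_recognizable V (fun w : word A => w.1 = c).
Proof.
pose f (e : A) : word bool := (e != c, [:: true]).
apply: sg_recognizable_ext (sg_recognizable_preim (wsubstM f)
  (HC sg_recognizable_letter_false (sg_recognizable_full HV bool))) => w.
by rewrite sg_concat_letter_false_full /=; split=> [[/negbFE/eqP] | ->] //; rewrite eqxx.
Qed.

Lemma sg_recognizable_last (c : A) :
  sg_recognizable V (fun w : word A => last w.1 w.2 = c).
Proof.
pose f (e : A) : word bool := (true, [:: e != c]).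
apply: sg_recognizable_ext (sg_recognizable_preim (wsubstM f)
  (HC (sg_recognizable_full HV bool) sg_recognizable_letter_false)) => -[a q].
have last_f b : last (b != c) (flatten [seq (f x).1 :: (f x).2 | x <- q]) =
    (last b q != c) by elim: q b => /=.
rewrite sg_concat_full_letter_false /= last_f.
by split=> [[/negbFE/eqP] | ->] //; rewrite eqxx.
Qed.

Lemma ends_separating_morph : exists S (phi : word A -> scar S),
  [/\ V S, word_morph phi & ends_separating phi].
Proof.
pose L (i : A * bool) (w : word A) := if i.2 then w.1 = i.1 else last w.1 w.2 = i.1.
have recL i : sg_recognizable V (L i).
  by case: i => c []; [apply: sg_recognizable_first | apply: sg_recognizable_last].
have [S [phi [HS phiM satL]]] := sg_recognizable_family HV recL.
exists S, phi; split=> // u v e; split.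
- exact/esym/(satL (u.1, true) u v e).
- exact/esym/(satL (last u.1 u.2, false) u v e).
Qed.

End EndLetters.

Lemma ends_separating_saturated (A : graph) X Y (f : word (gedg A) -> X)
    (g : word (gedg A) -> Y) (L : gpath A -> Prop) :
  ends_separating g -> coterminal_saturated (fun p => f (val p)) L ->
  forall p q : gpath A, f (val p) = f (val q) -> g (val p) = g (val q) -> L p -> L q.
Proof.
move=> g_ends satL p q ef /g_ends[ec ed]; apply: satL => //.
- by rewrite /pdom ed.
- by rewrite /pcod ec.
Qed.

Lemma word_morph_pair (A : finType) (S T : finSemigroup)
    (phi : word A -> scar S) (psi : word A -> scar T) :
  word_morph phi -> word_morph psi ->
  word_morph (fun w => (phi w, psi w) : scar (prod_sg S T)).
Proof. by move=> phiM psiM u v; rewrite phiM psiM. Qed.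

Lemma gpath_split (A : graph) (w : gpath A) u1 u2 : val w = wcat u1 u2 ->
  exists w1 w2 : gpath A,
    [/\ val w1 = u1, val w2 = u2, pdom w1 = pcod w2 & w = pcat w1 w2].
Proof.
move=> ew; have := valP w; rewrite ew /= cat_path => /and3P[Hu1 /eqP Hj Hu2].
exists (exist _ u1 Hu1), (exist _ u2 Hu2); split=> //.
by apply: val_inj; rewrite pcat_val.
Qed.

Definition ends_sgd (X : finType) (T : finSemigroup) : finSemigroupoid.
Proof.
refine (@FinSemigroupoid X (prod (prod X (scar T)) X)
  (fun e => e.2) (fun e => e.1.1)
  (fun s t => (s.1.1, smul s.1.2 t.1.2, t.2)) _ _ _) => //.
by move=> s t u _ _ /=; rewrite smulA.
Defined.

Lemma ends_sgd_divides X T : divides (ends_sgd X T) (sgd_of_sg T).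
Proof.
apply/divides_sgP; exists (fun (e : edg (ends_sgd X T)) (s : scar T) => s = e.1.2).
split=> [s | s t a b _ -> -> // | [[x a] y] [[x' a'] y'] b /= -> -> -> ->] //.
by exists s.1.2.
Qed.

Definition graph1 (A : finType) : graph := @Graph unit A (fun _ => tt) (fun _ => tt).

Lemma path_graph1 (A : finType) (a : A) q : path (@gadj (graph1 A)) a q.
Proof. by elim: q a => [|b q IH] a //=; rewrite IH /gadj eqxx. Qed.

Definition word_path (A : finType) (w : word A) : gpath (graph1 A) :=
  exist _ w (path_graph1 w.1 w.2).

Lemma word_path_cat (A : finType) (u v : word A) :
  word_path (wcat u v) = pcat (word_path u) (word_path v).
Proof. by apply: val_inj; rewrite pcat_val. Qed.

Section Concatenation.
Variable V : finSemigroup -> Prop.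
Hypothesis HV : sg_pseudovariety V.

Lemma gV_recognizable_lift (A : graph) (L : gpath A -> Prop) :
  sgd_recognizable (gV V) L ->
  exists S (psi : word (gedg A) -> scar S),
    [/\ V S, word_morph psi & coterminal_saturated (fun p => psi (val p)) L].
Proof.
move=> [F [fv [fe [/(gV_sg_divisor HV)[S HS FS] feH recL]]]].
have [psi psiM psi_fe] := divides_sg_hom_lift FS feH.
exists S, psi; split=> // p q ed ec ep Lp; apply/recL.
by exists p; split=> //; apply: psi_fe.
Qed.

Lemma sg_recognizable_image (A : finType) (S : finSemigroup) (phi : word A -> scar S)
    X (f : X -> word A) (P : X -> Prop) :
  V S -> word_morph phi ->
  sg_recognizable V (fun u => exists2 x, P x & phi (f x) = phi u).
Proof.
move=> HS phiM; apply/sg_recognizableP; exists S, phi; split=> // u v e [x Px ex].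
by exists x; rewrite // ex.
Qed.

Lemma sg_concat_closed_of_gV : sgd_concat_closed (gV V) -> sg_concat_closed V.
Proof.
move=> HC A L K recL recK.
have rec_path (M : word A -> Prop) : sg_recognizable V M ->
    sgd_recognizable (gV V) (fun p : gpath (graph1 A) => M (val p)).
  move=> /sg_recognizableP[S [phi [HS phiM satM]]].
  exists (sgd_of_sg S), (fun _ => tt), (fun p => phi (val p)).
  split; first exact: gV_sgd_of_sg.
    by split=> // u v e /=; rewrite -phiM -(pcat_val e).
  by move=> u; split=> [Mu | [v [Mv /satM]]]; [exists u | apply].
pose L' (p : gpath (graph1 A)) := L (val p).
pose K' (p : gpath (graph1 A)) := K (val p).
have [S [psi [HS psiM satC]]] :=
  gV_recognizable_lift (HC _ L' K' (rec_path _ recL) (rec_path _ recK)).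
apply/sg_recognizableP; exists S, psi; split=> // u v e [u1 [u2 [Lu1 Ku2 eu]]].
have [|p1 [p2 [Lp1 Kp2 ep ev]]] := satC (word_path u) (word_path v) erefl erefl e.
  by exists (word_path u1), (word_path u2); split; rewrite // eu word_path_cat.
by exists (val p1), (val p2); split; rewrite // -(pcat_val ep) -ev.
Qed.

Lemma gV_concat_closed : sg_concat_closed V -> sgd_concat_closed (gV V).
Proof.
move=> HC A L K recL recK.
have [S1 [psi1 [HS1 psi1M satL]]] := gV_recognizable_lift recL.
have [S2 [psi2 [HS2 psi2M satK]]] := gV_recognizable_lift recK.
have [G [g [HG gM g_ends]]] := ends_separating_morph HV HC (gedg A).
have [_ _ _ Vprod] := HV.
pose L0 u := exists2 p : gpath A, L p & (psi1 (val p), g (val p)) = (psi1 u, g u).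
pose K0 u := exists2 p : gpath A, K p & (psi2 (val p), g (val p)) = (psi2 u, g u).
have recL0 : sg_recognizable V L0.
  exact: sg_recognizable_image (Vprod _ _ HS1 HG) (word_morph_pair psi1M gM).
have recK0 : sg_recognizable V K0.
  exact: sg_recognizable_image (Vprod _ _ HS2 HG) (word_morph_pair psi2M gM).
have /sg_recognizableP[T [psi [HT psiM satC]]] := HC _ _ _ recL0 recK0.
exists (ends_sgd (gvtx A) T), id, (fun p => (pcod p, psi (val p), pdom p)); split.
- exact: gV_divides (ends_sgd_divides _ _) (gV_sgd_of_sg HT).
- by split=> // u v e /=; rewrite pdom_pcat // pcod_pcat // pcat_val // psiM.
move=> w; split=> [Lw | [v [[v1 [v2 [Lv1 Kv2 ev ->]]] [ec ep ed]]]]; first by exists w.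
have [|u1 [u2 [[p1 Lp1 [e1 f1]] [p2 Kp2 [e2 f2]] ew]]] := satC _ (val w) ep.
  by exists (val v1), (val v2); split; [exists v1 | exists v2 | apply: pcat_val].
have [w1 [w2 [ew1 ew2 ej ->]]] := gpath_split ew; subst u1 u2.
exists w1, w2; split=> //.
- exact: ends_separating_saturated g_ends satL _ _ e1 f1 Lp1.
- exact: ends_separating_saturated g_ends satK _ _ e2 f2 Kp2.
Qed.

End Concatenation.

Theorem mainTheorem4 (V : finSemigroup -> Prop) :
  sg_pseudovariety V ->
  (sg_concat_closed V <-> sgd_concat_closed (gV V)).
Proof.
by move=> HV; split; [apply: gV_concat_closed | apply: sg_concat_closed_of_gV].
Qed.
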